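(* Let $\Gamma=F_r$ ($r\ge2$) be free on $\{a,b,a_3,\dots,a_r\}$, let $n\ge2$, $u_n=a^nba^{-n}b^{-1}$, $D_n=V_{u_n}\subseteq Y$. Let $t\in\Gamma$ and $y\in Y$, and assume $t$ starts with $u_n$. Then $ty\in D_n$ if and only if $y$ does not start with $t^{-1}u_nb$.
   Context: $Y$ is the Gromov boundary of $\Gamma$: infinite reduced words in the generators and their inverses, with $\Gamma$ acting by concatenation and cancellation. For nontrivial $s\in\Gamma$: $y\in Y$ starts with $s$ if $y=sy'$ with $y'\in Y$ and the last letter of the reduced word of $s$ is not the inverse of the first letter of $y'$; $V_s$ is the set of $y\in Y$ starting with $s$; $t\in\Gamma$ starts with $s$ if the reduced word of $t$ begins with the reduced word of $s$. *)

(* Free group F_r on generators indexed by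
   0..r-1 (generator 0 = a, generator 1 = b, 2..r-1 = a_3..a_r). *)
From mathcomp Require Import all_boot.
Set Implicit Arguments. Unset Strict Implicit. Unset Printing Implicit Defensive.

(* A letter (i, true) is the generator x_i, (i, false) is x_i^{-1}. *)
Definition letter := (nat * bool)%type.
Definition linv (l : letter) : letter := (l.1, ~~ l.2).

Definition nocancel (p q : letter) : bool := q != linv p.
Definition reduced (w : seq letter) : bool := sorted nocancel w.

Definition inGamma (r : nat) (w : seq letter) : bool :=
  reduced w && all (fun l => l.1 < r) w.

Definition reduce (w : seq letter) : seq letter :=
  foldr (fun x acc => match acc with
                      | y :: acc' => if y == linv x then acc' else x :: acc
                      | [::] => [:: x] end) [::] w.

Definition gmul (w1 w2 : seq letter) : seq letter := reduce (w1 ++ w2).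
Definition ginv (w : seq letter) : seq letter := rev (map linv w).

(* Gromov boundary Y: infinite reduced words *)
Definition stream := nat -> letter.
Definition inY (r : nat) (y : stream) : Prop :=
  (forall k, (y k).1 < r) /\ (forall k, y k.+1 != linv (y k)).

Definition scons (x : letter) (y : stream) : stream :=
  fun k => if k is k'.+1 then y k' else x.

(* action on the boundary: concatenation with cancellation; the word is
   processed from its last letter to its first *)
Fixpoint act_rev (rw : seq letter) (y : stream) : stream :=
  match rw with
  | [::] => y
  | x :: rw' => if y 0 == linv x then act_rev rw' (fun k => y k.+1)
                else act_rev rw' (scons x y)
  end.
Definition act (w : seq letter) (y : stream) : stream := act_rev (rev w) y.

Definition starts_with_bd (r : nat) (s : seq letter) (y : stream) : Prop :=
  s != [::] /\
  exists y', inY r y' /\ (forall k, y k = act s y' k) /\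
             y' 0 != linv (last (y' 0) s).

Definition V (r : nat) (s : seq letter) : stream -> Prop := starts_with_bd r s.

Definition ga : letter := (0, true).
Definition gb : letter := (1, true).

Definition u (n : nat) : seq letter :=
  nseq n ga ++ [:: gb] ++ nseq n (linv ga) ++ [:: linv gb].

Definition D (r n : nat) : stream -> Prop := V r (u n).

Definition starts_with (s t : seq letter) : bool := prefix s t.

From mathcomp Require Import all_boot.
From Stdlib Require Import FunctionalExtensionality.
Set Implicit Arguments. Unset Strict Implicit. Unset Printing Implicit Defensive.

(* Write t = u_n w.  As t is reduced, w does not begin with b, so t^-1 u_n b
   reduces to the reduced word w^-1 b.  Both conditions are then read off the
   first letter of z = w y: t y = u_n z lies in D_n iff z does not begin with
   b (u_n ends with b^-1), while y begins with w^-1 b iff z begins with b. *)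

Definition reduced_stream (y : stream) : Prop := forall k, y k.+1 != linv (y k).

Lemma linvK : involutive linv.
Proof. by case=> i e; rewrite /linv /= negbK. Qed.

Lemma ginv_cons x w : ginv (x :: w) = rcons (ginv w) (linv x).
Proof. by rewrite /ginv /= rev_cons. Qed.

Lemma ginv_rcons w x : ginv (rcons w x) = linv x :: ginv w.
Proof. by rewrite /ginv map_rcons rev_rcons. Qed.

Lemma ginv_cat w1 w2 : ginv (w1 ++ w2) = ginv w2 ++ ginv w1.
Proof. by rewrite /ginv map_cat rev_cat. Qed.

Lemma ginvK : involutive ginv.
Proof. by move=> w; rewrite /ginv map_rev revK (mapK linvK). Qed.

Lemma all_ginv (P : pred nat) w :
  all (fun l => P l.1) (ginv w) = all (fun l => P l.1) w.
Proof. by rewrite /ginv all_rev all_map. Qed.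

Lemma act_cat w1 w2 y : act (w1 ++ w2) y = act w1 (act w2 y).
Proof.
rewrite /act rev_cat; elim: (rev w2) y => [|x w IH] y //=.
by case: ifP.
Qed.

Lemma act_cons x w y : act (x :: w) y = act [:: x] (act w y).
Proof. by rewrite -act_cat. Qed.

Lemma act1 x y :
  act [:: x] y = if y 0 == linv x then (fun k => y k.+1) else scons x y.
Proof. by []. Qed.

Lemma act1_reduced x y : reduced_stream y -> reduced_stream (act [:: x] y).
Proof.
by move=> y_red; rewrite act1; case: eqP => [_ k | /eqP y0x [|k]] /=.
Qed.

Lemma act_reduced w y : reduced_stream y -> reduced_stream (act w y).
Proof.
elim: w => [|x w IH] // y_red.
by rewrite act_cons; apply/act1_reduced/IH.
Qed.

Lemma act_inY r w y : all (fun l => l.1 < r) w -> inY r y -> inY r (act w y).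
Proof.
elim: w => [|x w IH] //= /andP[xr w_bd] /(IH w_bd) [z_bd z_red].
rewrite act_cons; split; last exact: act1_reduced.
by rewrite act1; case: eqP => _ [|k] /=; rewrite ?z_bd.
Qed.

Lemma act1K x y : reduced_stream y -> act [:: linv x] (act [:: x] y) = y.
Proof.
move=> y_red; rewrite (act1 x); case: eqP => [y0 | _].
  rewrite act1 /= linvK; have := y_red 0; rewrite y0 linvK => /negbTE ->.
  by apply: functional_extensionality => -[|k].
by rewrite act1 /= linvK eqxx; apply: functional_extensionality.
Qed.

Lemma actK w y : reduced_stream y -> act (ginv w) (act w y) = y.
Proof.
elim: w y => [|x w IH] y y_red //.
by rewrite act_cons ginv_cons -cats1 act_cat act1K ?IH //; apply: act_reduced.
Qed.

Lemma actKV w y : reduced_stream y -> act w (act (ginv w) y) = y.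
Proof. by move=> y_red; rewrite -{1}(ginvK w) actK. Qed.

Lemma act1_head x y :
  reduced_stream y -> (act [:: linv x] y 0 != linv x) = (y 0 == x).
Proof.
move=> y_red; rewrite act1 linvK; have [y0 | _] := eqVneq (y 0) x.
  by have := y_red 0; rewrite y0.
by rewrite /= eqxx.
Qed.

(* The witness y' in the definition of "y starts with s" is forced to be s^-1 y. *)
Lemma starts_with_bd_rcons r p x y :
  all (fun l => l.1 < r) (rcons p x) -> inY r y ->
  starts_with_bd r (rcons p x) y <-> act (ginv (rcons p x)) y 0 != linv x.
Proof.
move=> s_bd yY; split.
  case=> _ [y' [[_ y'_red] [yE]]]; rewrite last_rcons => y'0.
  have -> : y = act (rcons p x) y' by apply: functional_extensionality.
  by rewrite actK.
move=> y'0; split; first by case: p {s_bd y'0}.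
exists (act (ginv (rcons p x)) y); split.
  by apply: act_inY; rewrite // (all_ginv (fun i => i < r)).
by split; [move=> k; rewrite actKV //; case: yY | rewrite last_rcons].
Qed.

Definition push_letter (x : letter) (w : seq letter) : seq letter :=
  if w is y :: w' then (if y == linv x then w' else x :: w) else [:: x].

Lemma reduce_cons x w : reduce (x :: w) = push_letter x (reduce w).
Proof. by []. Qed.

Lemma reduce_cat w1 w2 : reduce (w1 ++ w2) = foldr push_letter (reduce w2) w1.
Proof. by rewrite /reduce foldr_cat. Qed.

Lemma reduce_catr w w1 w2 :
  reduce w1 = reduce w2 -> reduce (w ++ w1) = reduce (w ++ w2).
Proof. by rewrite !reduce_cat => ->. Qed.

Lemma push_letter_reduced x w : reduced w -> reduced (push_letter x w).
Proof.
case: w => [|y w] //= w_red; case: ifP => yx; first exact: path_sorted w_red.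
by rewrite /reduced /= /nocancel yx w_red.
Qed.

Lemma reduce_reduced w : reduced (reduce w).
Proof. by elim: w => [|x w IH] //; rewrite reduce_cons push_letter_reduced. Qed.

Lemma reduce_id w : reduced w -> reduce w = w.
Proof.
elim: w => [|x w IH] // w_red.
rewrite reduce_cons IH; last exact: path_sorted w_red.
by case: w w_red {IH} => [|y w] //= /andP[/negbTE ->].
Qed.

Lemma reduce_idem w : reduce (reduce w) = reduce w.
Proof. exact/reduce_id/reduce_reduced. Qed.

Lemma push_letterK x w :
  reduced w -> push_letter x (push_letter (linv x) w) = w.
Proof.
case: w => [|y w] /=; first by rewrite eqxx.
rewrite linvK; case: eqP => [-> | _] w_red; last by rewrite /= eqxx.
by case: w w_red => [|z w] //= /andP[/negbTE ->].
Qed.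

Lemma reduce_ginvK p w : reduce (ginv p ++ p ++ w) = reduce w.
Proof.
elim: p w => [|x p IH] w //.
rewrite ginv_cons -cats1 -catA (reduce_catr _ (_ : _ = reduce (p ++ w))) ?IH //.
by rewrite cat1s !reduce_cons -{2}(linvK x) push_letterK ?reduce_reduced.
Qed.

Lemma reduced_ginv w : reduced w -> reduced (ginv w).
Proof.
rewrite /reduced /ginv rev_sorted sorted_map; apply: sub_sorted => x y.
by rewrite /relpre /nocancel; apply: contra => /eqP ->; rewrite /= linvK.
Qed.

Lemma gmul_ginv_cat p w q : gmul (ginv (p ++ w)) (gmul p q) = reduce (ginv w ++ q).
Proof.
by rewrite /gmul (reduce_catr _ (reduce_idem _)) ginv_cat -catA
  (reduce_catr _ (reduce_ginvK p q)).
Qed.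

Lemma u_rcons n : u n = rcons (nseq n ga ++ gb :: nseq n (linv ga)) (linv gb).
Proof. by rewrite /u -cats1 /= -!catA. Qed.

Theorem lemma5p6 (r n : nat) (t : seq letter) (y : stream) :
  2 <= r -> 2 <= n -> inGamma r t -> inY r y ->
  starts_with (u n) t ->
  (D r n (act t y) <-> ~ starts_with_bd r (gmul (ginv t) (gmul (u n) [:: gb])) y).
Proof.
move=> r2 _ /andP[t_red] + yY /prefixP[w t_def]; subst t.
rewrite all_cat => /andP[u_bd w_bd].
have w_red : reduced (linv gb :: w).
  by move: t_red; rewrite u_rcons cat_rcons => /cat_sorted2[].
set z := act w y; have zY : inY r z by apply: act_inY.
have z_red : reduced_stream z by case: zY.
have head_u : D r n (act (u n ++ w) y) <-> z 0 != gb.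
  rewrite /D /V act_cat -/z {1}u_rcons.
  apply: iff_trans (starts_with_bd_rcons _ _) _; rewrite -?u_rcons //.
    exact: act_inY.
  by rewrite actK ?linvK.
have ginv_wb : ginv w ++ [:: gb] = ginv (linv gb :: w).
  by rewrite ginv_cons linvK cats1.
have head_wb : starts_with_bd r (rcons (ginv w) gb) y <-> z 0 == gb.
  have wb_bd : all (fun l => l.1 < r) (rcons (ginv w) gb).
    by rewrite -cats1 all_cat (all_ginv (fun i => i < r)) w_bd /= andbT.
  apply: iff_trans (starts_with_bd_rcons wb_bd yY) _.
  by rewrite ginv_rcons ginvK act_cons act1_head.
rewrite gmul_ginv_cat ginv_wb reduce_id ?reduced_ginv // -ginv_wb cats1.
split=> [/head_u z0 /head_wb | z0]; first by rewrite (negbTE z0).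
by apply/head_u/negP => /head_wb.
Qed.
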